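(* Let $k\ge2$, $\lambda>0$, $\theta>1$ (i.e. $J<0$). Put $\theta_{\rm cr}=2\bigl(\frac{k+1}{k-1}\bigr)^2-1$. Then: (1) if $\theta\le\theta_{\rm cr}$, there is exactly one TISGM; (2) if $\theta>\theta_{\rm cr}$, the quadratic $2x^2+[4-(\theta-1)(k-1)]x+\theta+1=0$ has two distinct positive roots $x_1,x_2$, and the two numbers $\frac{2^kx_i}{(1+\theta)^{k+1}}\bigl(\frac{1+\theta+2x_i}{2(1+x_i)}\bigr)^k$, $i=1,2$, are distinct; denote them $\lambda_-<\lambda_+$. Then: (2a) if $\lambda\in(0,\lambda_-)\cup(\lambda_+,\infty)$ there is exactly one TISGM; (2b) if $\lambda\in\{\lambda_-,\lambda_+\}$ there are exactly two TISGMs; (2c) if $\lambda\in(\lambda_-,\lambda_+)$ there are exactly three TISGMs.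
   Context: The SCWR model on the Cayley tree $\mathbb{T}^k$ (each vertex has $k$ direct successors) has spins in $\{-1,0,1\}$, activity $\lambda>0$ and interaction parameter $\theta=e^{-J\beta}>0$ ($J<0$ antiferromagnetic, i.e. $\theta>1$; $J>0$ ferromagnetic, i.e. $0<\theta<1$). Translation-invariant splitting Gibbs measures (TISGMs) are in one-to-one correspondence with the solutions $(x,y)\in(0,\infty)^2$ of the system $x=\lambda\bigl(\frac{1+x+\theta y}{1+x+y}\bigr)^k$, $y=\lambda\bigl(\frac{1+\theta x+y}{1+x+y}\bigr)^k$; ''the number of TISGMs'' means the number of such positive solutions. *)

From Stdlib Require Import Reals List.
Import ListNotations.
Open Scope R_scope.

(* The TISGM system on the Cayley tree T^k with activity lam, parameter theta. *)
Definition is_TISGM_solution (k : nat) (lam theta x y : R) : Prop :=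
  0 < x /\ 0 < y /\
  x = lam * ((1 + x + theta * y) / (1 + x + y)) ^ k /\
  y = lam * ((1 + theta * x + y) / (1 + x + y)) ^ k.

Definition has_exactly (n : nat) (P : R * R -> Prop) : Prop :=
  exists l : list (R * R),
    NoDup l /\ length l = n /\ (forall p, In p l <-> P p).

(* Number of TISGMs = number of positive solutions (x,y). *)
Definition num_TISGM_eq (k : nat) (lam theta : R) (n : nat) : Prop :=
  has_exactly n (fun p => is_TISGM_solution k lam theta (fst p) (snd p)).

Definition theta_cr (k : nat) : R :=
  2 * ((INR k + 1) / (INR k - 1)) ^ 2 - 1.

Definition quad (k : nat) (theta x : R) : R :=
  2 * x ^ 2 + (4 - (theta - 1) * (INR k - 1)) * x + theta + 1.

Definition lam_of (k : nat) (theta x : R) : R :=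
  2 ^ k * x / (1 + theta) ^ (k + 1) *
  ((1 + theta + 2 * x) / (2 * (1 + x))) ^ k.

From Stdlib Require Import Reals Ranalysis5 Lra Lia List FinFun.
From Coquelicot Require Import Coquelicot.
Import ListNotations.
Open Scope R_scope.

(* For theta > 1 every solution (x, y) of the TISGM system is diagonal
   (x = y), and a diagonal solution with x > 0 exists exactly when
   lam = F x, where F x = diag_map k theta x = x ((1+2x)/(1+(1+theta)x))^k.  Counting TISGMs is
   therefore counting positive preimages of lam under F. *)

Definition diag_map (k : nat) (t x : R) : R :=
  x * ((1 + 2 * x) / (1 + (1 + t) * x)) ^ k.

Lemma pow_lt_pow_base (a b : R) (n : nat) :
  0 <= a < b -> (0 < n)%nat -> a ^ n < b ^ n.
Proof.
  intros [Ha Hab] Hn. destruct n as [|n]; [lia|]. clear Hn.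
  induction n as [|n IH]; [simpl; lra|].
  change (a * a ^ S n < b * b ^ S n).
  assert (0 <= a ^ S n) by (apply pow_le; lra). nra.
Qed.

(* For theta > 1 (antiferromagnetic case) solutions are diagonal: if x < y
   the right-hand side of the first equation exceeds that of the second. *)
Lemma solution_diagonal (k : nat) (lam t x y : R) :
  (1 <= k)%nat -> 1 < t -> is_TISGM_solution k lam t x y -> x = y.
Proof.
  intros Hk Ht [Hx [Hy [Ex Ey]]].
  set (A := (1 + x + t * y) / (1 + x + y)) in Ex.
  set (B := (1 + t * x + y) / (1 + x + y)) in Ey.
  assert (HA : 0 < A) by (apply Rdiv_lt_0_compat; nra).
  assert (HB : 0 < B) by (apply Rdiv_lt_0_compat; nra).
  assert (Hlam : 0 < lam) by (assert (0 < A ^ k) by (apply pow_lt; lra); nra).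
  assert (HAB : A - B = (t - 1) * (y - x) / (1 + x + y))
    by (unfold A, B; field; lra).
  destruct (Rtotal_order x y) as [Hlt|[Heq|Hgt]]; auto; exfalso.
  - assert (B < A).
    { enough (0 < A - B) by lra. rewrite HAB. apply Rdiv_lt_0_compat; nra. }
    assert (B ^ k < A ^ k) by (apply pow_lt_pow_base; lra || lia). nra.
  - assert (A < B).
    { enough (A - B < 0) by lra. rewrite HAB. unfold Rdiv.
      assert (0 < / (1 + x + y)) by (apply Rinv_0_lt_compat; lra).
      assert ((t - 1) * (y - x) < 0) by nra. nra. }
    assert (A ^ k < B ^ k) by (apply pow_lt_pow_base; lra || lia). nra.
Qed.

Lemma diagonal_solution_iff (k : nat) (lam t x : R) :
  1 < t -> 0 < x -> is_TISGM_solution k lam t x x <-> diag_map k t x = lam.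
Proof.
  intros Ht Hx.
  assert (Hinv : ((1 + 2 * x) / (1 + (1 + t) * x)) ^ k
                 * ((1 + x + t * x) / (1 + x + x)) ^ k = 1).
  { rewrite <- Rpow_mult_distr.
    replace (_ * _) with 1 by (field; split; nra). apply pow1. }
  unfold is_TISGM_solution, diag_map.
  replace (1 + t * x + x) with (1 + x + t * x) by ring.
  split.
  - intros [_ [_ [E _]]]. rewrite E at 1.
    transitivity (lam * (((1 + 2 * x) / (1 + (1 + t) * x)) ^ k
                         * ((1 + x + t * x) / (1 + x + x)) ^ k)); [ring|].
    rewrite Hinv. ring.
  - intros E. rewrite <- E.
    replace (x * ((1 + 2 * x) / (1 + (1 + t) * x)) ^ k
             * ((1 + x + t * x) / (1 + x + x)) ^ k) with x
      by (rewrite Rmult_assoc, Hinv; ring).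
    tauto.
Qed.

Definition has_n_preimages (g : R -> R) (lam : R) (n : nat) : Prop :=
  exists l : list R, NoDup l /\ length l = n /\
    (forall x, In x l <-> 0 < x /\ g x = lam).

Lemma num_TISGM_of_preimages (k : nat) (lam t : R) (n : nat) :
  (1 <= k)%nat -> 1 < t ->
  has_n_preimages (diag_map k t) lam n -> num_TISGM_eq k lam t n.
Proof.
  intros Hk Ht [l [Hnd [Hlen Hl]]].
  exists (map (fun x => (x, x)) l). split; [|split].
  - apply Injective_map_NoDup; [|exact Hnd]. now intros a b [= ->].
  - now rewrite length_map.
  - intros [x y]. simpl. rewrite in_map_iff. split.
    + intros [z [[= <- <-] Hz]]. apply Hl in Hz as [Hz Ez].
      now apply (diagonal_solution_iff k lam t z Ht Hz).
    + intros Hs. pose proof (solution_diagonal k lam t x y Hk Ht Hs) as <-.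
      assert (Hx : 0 < x) by apply Hs.
      exists x. split; [reflexivity|]. apply Hl.
      split; [exact Hx|]. now apply (diagonal_solution_iff k lam t x Ht Hx).
Qed.

Definition strict_incr_on (g : R -> R) (P : R -> Prop) : Prop :=
  forall a b, P a -> P b -> a < b -> g a < g b.

Definition strict_decr_on (g : R -> R) (P : R -> Prop) : Prop :=
  forall a b, P a -> P b -> a < b -> g b < g a.

Lemma strict_incr_on_inj (g : R -> R) (P : R -> Prop) :
  strict_incr_on g P -> forall x y, P x -> P y -> g x = g y -> x = y.
Proof.
  intros Hg x y Px Py E.
  destruct (Rtotal_order x y) as [h|[h|h]]; auto.
  - specialize (Hg x y Px Py h); lra.
  - specialize (Hg y x Py Px h); lra.
Qed.

Lemma strict_decr_on_inj (g : R -> R) (P : R -> Prop) :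
  strict_decr_on g P -> forall x y, P x -> P y -> g x = g y -> x = y.
Proof.
  intros Hg x y Px Py E.
  destruct (Rtotal_order x y) as [h|[h|h]]; auto.
  - specialize (Hg x y Px Py h); lra.
  - specialize (Hg y x Py Px h); lra.
Qed.

Section PositivePreimages.

Variable g : R -> R.
Hypothesis g_cont : forall x, 0 <= x -> continuity_pt g x.
Hypothesis g_between : forall x, 0 < x -> 0 < g x < x.
Hypothesis g_unbounded : forall y r, exists X, r < X /\ y < g X.

Lemma preimage_between (a b y : R) :
  0 <= a < b -> (g a < y < g b \/ g b < y < g a) ->
  exists c, a < c < b /\ g c = y.
Proof.
  intros Hab Hy.
  assert (Hcont : forall s c, a <= c <= b ->
            continuity_pt (fun x => s * (g x - y)) c).
  { intros s c Hc. apply continuity_pt_mult; [apply continuity_pt_const; now intros u v|].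
    apply continuity_pt_minus; [apply g_cont; lra|].
    apply continuity_pt_const. now intros u v. }
  assert (Hs : exists s, s * (g a - y) < 0 /\ 0 < s * (g b - y)).
  { destruct Hy; [exists 1|exists (-1)]; lra. }
  destruct Hs as [s [Hsa Hsb]].
  destruct (IVT_interv (fun x => s * (g x - y)) a b) as [c [Hcab Ec]];
    [now apply Hcont|lra|exact Hsa|exact Hsb|].
  simpl in Ec.
  assert (c <> a) by (intros ->; lra). assert (c <> b) by (intros ->; lra).
  exists c. split; [lra|].
  assert (s <> 0) by (intros ->; lra).
  apply Rmult_integral in Ec as [Ec|Ec]; [contradiction|lra].
Qed.

(* Every level 0 < y < g r is attained in (0, r), since g x < x near 0. *)
Lemma preimage_below (r y : R) :
  0 < r -> 0 < y < g r -> exists c, 0 < c < r /\ g c = y.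
Proof.
  intros Hr Hy. set (z := Rmin y (r / 2)).
  assert (Hz : 0 < z) by (apply Rmin_glb_lt; lra).
  assert (z <= y) by apply Rmin_l. assert (z <= r / 2) by apply Rmin_r.
  pose proof (g_between z Hz).
  destruct (preimage_between z r y) as [c [Hc Ec]]; [lra|lra|].
  exists c. split; [lra|exact Ec].
Qed.

Lemma preimage_above (r y : R) :
  0 <= r -> g r < y -> exists c, r < c /\ g c = y.
Proof.
  intros Hr Hy. destruct (g_unbounded y r) as [X [HX HyX]].
  destruct (preimage_between r X y) as [c [Hc Ec]]; [lra|lra|].
  exists c. split; [lra|exact Ec].
Qed.

Lemma has_n_preimages_intro (lam : R) (l : list R) :
  NoDup l -> (forall x, In x l -> 0 < x /\ g x = lam) ->
  (forall x, 0 < x -> g x = lam -> In x l) ->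
  has_n_preimages g lam (length l).
Proof.
  intros Hnd Hsound Hcompl. exists l. split; [exact Hnd|split; [reflexivity|]].
  intros x. split; [apply Hsound|intros [Hx Ex]; now apply Hcompl].
Qed.

Lemma preimages_increasing (lam : R) :
  strict_incr_on g (fun x => 0 < x) -> 0 < lam -> has_n_preimages g lam 1.
Proof.
  intros Hinc Hlam.
  destruct (g_unbounded lam 0) as [X [HX HlamX]].
  destruct (preimage_below X lam) as [a [Ha Ea]]; [lra|lra|].
  apply (has_n_preimages_intro lam [a]).
  - repeat constructor. now simpl.
  - intros x [<-|[]]. split; [lra|exact Ea].
  - intros x Hx Ex. left. symmetry.
    apply (strict_incr_on_inj g (fun x => 0 < x) Hinc); [lra|lra|congruence].
Qed.


Section NShape.

Variables r1 r2 : R.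
Hypothesis r1_pos : 0 < r1.
Hypothesis r1_lt_r2 : r1 < r2.
Hypothesis incr_left : strict_incr_on g (fun x => 0 < x <= r1).
Hypothesis decr_mid : strict_decr_on g (fun x => r1 <= x <= r2).
Hypothesis incr_right : strict_incr_on g (fun x => r2 <= x).

Lemma local_min_lt_local_max : g r2 < g r1.
Proof. apply decr_mid; lra. Qed.

Lemma below_local_max (x : R) : 0 < x <= r2 -> x <> r1 -> g x < g r1.
Proof.
  intros Hx Hne. destruct (Rlt_le_dec x r1).
  - apply incr_left; lra.
  - apply decr_mid; lra.
Qed.

Lemma above_local_min (x : R) : r1 <= x -> x <> r2 -> g r2 < g x.
Proof.
  intros Hx Hne. destruct (Rlt_le_dec x r2).
  - apply decr_mid; lra.
  - apply incr_right; lra.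
Qed.

Lemma preimage_left_unique (x y : R) :
  0 < x <= r1 -> 0 < y <= r1 -> g x = g y -> x = y.
Proof. now apply strict_incr_on_inj with (P := fun x => 0 < x <= r1). Qed.

Lemma preimage_mid_unique (x y : R) :
  r1 <= x <= r2 -> r1 <= y <= r2 -> g x = g y -> x = y.
Proof. now apply strict_decr_on_inj with (P := fun x => r1 <= x <= r2). Qed.

Lemma preimage_right_unique (x y : R) : r2 <= x -> r2 <= y -> g x = g y -> x = y.
Proof. now apply strict_incr_on_inj with (P := fun x => r2 <= x). Qed.

Lemma preimages_outside (lam : R) :
  0 < lam -> lam < g r2 \/ g r1 < lam -> has_n_preimages g lam 1.
Proof.
  pose proof local_min_lt_local_max.
  intros Hlam [Hlow|Hhigh].
  - destruct (preimage_below r1 lam) as [a [Ha Ea]]; [lra|lra|].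
    apply (has_n_preimages_intro lam [a]).
    + repeat constructor. now simpl.
    + intros x [<-|[]]. split; [lra|exact Ea].
    + intros x Hx Ex. left. destruct (Rle_lt_dec x r1).
      * apply preimage_left_unique; lra.
      * assert (x <> r2) by (intros ->; lra).
        pose proof (above_local_min x). lra.
  - destruct (preimage_above r2 lam) as [c [Hc Ec]]; [lra|lra|].
    apply (has_n_preimages_intro lam [c]).
    + repeat constructor. now simpl.
    + intros x [<-|[]]. split; [lra|exact Ec].
    + intros x Hx Ex. left. destruct (Rle_lt_dec r2 x).
      * apply preimage_right_unique; lra.
      * assert (x <> r1) by (intros ->; lra).
        pose proof (below_local_max x). lra.
Qed.

Lemma preimages_critical (lam : R) :
  0 < lam -> lam = g r2 \/ lam = g r1 -> has_n_preimages g lam 2.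
Proof.
  pose proof local_min_lt_local_max.
  intros Hlam [->| ->].
  - destruct (preimage_below r1 (g r2)) as [a [Ha Ea]]; [lra|lra|].
    apply (has_n_preimages_intro (g r2) [a; r2]).
    + repeat constructor; simpl; intuition lra.
    + intros x [<-|[<-|[]]]; split; lra.
    + intros x Hx Ex. destruct (Rle_lt_dec x r1).
      * left. apply preimage_left_unique; lra.
      * right. left. destruct (Req_dec x r2) as [->|Hne]; [reflexivity|].
        pose proof (above_local_min x). lra.
  - destruct (preimage_above r2 (g r1)) as [c [Hc Ec]]; [lra|lra|].
    apply (has_n_preimages_intro (g r1) [r1; c]).
    + repeat constructor; simpl; intuition lra.
    + intros x [<-|[<-|[]]]; split; lra.
    + intros x Hx Ex. destruct (Rle_lt_dec r2 x).
      * right. left. apply preimage_right_unique; lra.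
      * left. destruct (Req_dec x r1) as [->|Hne]; [reflexivity|].
        pose proof (below_local_max x). lra.
Qed.

Lemma preimages_inside (lam : R) :
  g r2 < lam < g r1 -> has_n_preimages g lam 3.
Proof.
  intros Hlam.
  assert (HB : 0 < g r2) by (apply g_between; lra).
  destruct (preimage_below r1 lam) as [a [Ha Ea]]; [lra|lra|].
  destruct (preimage_between r1 r2 lam) as [m [Hm Em]]; [lra|lra|].
  destruct (preimage_above r2 lam) as [c [Hc Ec]]; [lra|lra|].
  apply (has_n_preimages_intro lam [a; m; c]).
  - repeat constructor; simpl; intuition lra.
  - intros x [<-|[<-|[<-|[]]]]; split; lra.
  - intros x Hx Ex. destruct (Rle_lt_dec x r1); [|destruct (Rle_lt_dec x r2)].
    + left. apply preimage_left_unique; lra.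
    + right. left. apply preimage_mid_unique; lra.
    + right. right. left. apply preimage_right_unique; lra.
Qed.

End NShape.

End PositivePreimages.

Lemma strict_incr_of_deriv (f f' : R -> R) (a b : R) :
  a < b -> (forall c, a <= c <= b -> derivable_pt_lim f c (f' c)) ->
  (forall c, a < c < b -> 0 < f' c) -> f a < f b.
Proof.
  intros Hab Hd Hpos.
  destruct (MVT_cor2 f f' a b Hab Hd) as [c [Ec Hc]].
  specialize (Hpos c Hc). nra.
Qed.

Lemma strict_decr_of_deriv (f f' : R -> R) (a b : R) :
  a < b -> (forall c, a <= c <= b -> derivable_pt_lim f c (f' c)) ->
  (forall c, a < c < b -> f' c < 0) -> f b < f a.
Proof.
  intros Hab Hd Hneg.
  destruct (MVT_cor2 f f' a b Hab Hd) as [c [Ec Hc]].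
  specialize (Hneg c Hc). nra.
Qed.

(* The positive factor of the derivative of diag_map. *)
Definition diag_deriv_weight (k : nat) (t x : R) : R :=
  ((1 + 2 * x) / (1 + (1 + t) * x)) ^ (pred k)
  / ((1 + t) * (1 + (1 + t) * x) ^ 2).

Lemma diag_deriv_weight_pos (k : nat) (t x : R) :
  1 < t -> 0 <= x -> 0 < diag_deriv_weight k t x.
Proof.
  intros Ht Hx. unfold diag_deriv_weight. apply Rdiv_lt_0_compat.
  - apply pow_lt, Rdiv_lt_0_compat; nra.
  - apply Rmult_lt_0_compat; [lra|]. apply pow_lt; nra.
Qed.

(* F'(x) = weight(x) * quad k theta ((1+theta) x): this is where the
   quadratic of the theorem comes from. *)
Lemma diag_map_deriv (k : nat) (t x : R) :
  (1 <= k)%nat -> 1 < t -> 0 <= x ->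
  derivable_pt_lim (diag_map k t) x
    (diag_deriv_weight k t x * quad k t ((1 + t) * x)).
Proof.
  intros Hk Ht Hx. apply is_derive_Reals. unfold diag_map, diag_deriv_weight.
  assert (0 < 1 + (1 + t) * x) by nra.
  auto_derive; [lra|].
  destruct k as [|m]; [lia|]. simpl pred. unfold quad. rewrite S_INR. simpl pow.
  set (g := (1 + 2 * x) * / (1 + (1 + t) * x)).
  change ((1 + 2 * x) / (1 + (1 + t) * x)) with g.
  set (gm := g ^ m). unfold g. field. lra.
Qed.

Lemma diag_map_continuous (k : nat) (t x : R) :
  (1 <= k)%nat -> 1 < t -> 0 <= x -> continuity_pt (diag_map k t) x.
Proof.
  intros Hk Ht Hx. apply derivable_continuous_pt.
  eexists. now apply diag_map_deriv.
Qed.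

Lemma diag_map_incr (k : nat) (t a b : R) :
  (1 <= k)%nat -> 1 < t -> 0 <= a -> a < b ->
  (forall c, a < c < b -> 0 < quad k t ((1 + t) * c)) ->
  diag_map k t a < diag_map k t b.
Proof.
  intros Hk Ht Ha Hab Hq.
  apply (strict_incr_of_deriv _ (fun c => diag_deriv_weight k t c * quad k t ((1 + t) * c)) a b Hab).
  - intros c Hc. apply diag_map_deriv; auto; lra.
  - intros c Hc. apply Rmult_lt_0_compat; [apply diag_deriv_weight_pos|apply Hq]; lra.
Qed.

Lemma diag_map_decr (k : nat) (t a b : R) :
  (1 <= k)%nat -> 1 < t -> 0 <= a -> a < b ->
  (forall c, a < c < b -> quad k t ((1 + t) * c) < 0) ->
  diag_map k t b < diag_map k t a.
Proof.
  intros Hk Ht Ha Hab Hq.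
  apply (strict_decr_of_deriv _ (fun c => diag_deriv_weight k t c * quad k t ((1 + t) * c)) a b Hab).
  - intros c Hc. apply diag_map_deriv; auto; lra.
  - intros c Hc. assert (0 < diag_deriv_weight k t c) by (apply diag_deriv_weight_pos; lra).
    specialize (Hq c Hc). nra.
Qed.

(* 0 < F x < x, since the base of the power lies in (0, 1). *)
Lemma diag_map_between (k : nat) (t x : R) :
  (1 <= k)%nat -> 1 < t -> 0 < x -> 0 < diag_map k t x < x.
Proof.
  intros Hk Ht Hx. unfold diag_map.
  assert (Hbase : 0 <= (1 + 2 * x) / (1 + (1 + t) * x) < 1).
  { split; [apply Rlt_le, Rdiv_lt_0_compat; nra|].
    apply Rlt_div_l; nra. }
  assert (0 < ((1 + 2 * x) / (1 + (1 + t) * x)) ^ k)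
    by (apply pow_lt, Rdiv_lt_0_compat; nra).
  destruct (pow_lt_1_compat _ k Hbase) as [_ Hlt1]; [lia|]. nra.
Qed.

(* F x >= x (2/(1+theta))^k, so F is unbounded above. *)
Lemma diag_map_unbounded (k : nat) (t : R) :
  1 < t -> forall y r, exists X, r < X /\ y < diag_map k t X.
Proof.
  intros Ht y r. set (c := (2 / (1 + t)) ^ k).
  assert (Hc : 0 < c) by (apply pow_lt, Rdiv_lt_0_compat; lra).
  assert (Hlin : forall x, 0 < x -> x * c <= diag_map k t x).
  { intros x Hx. unfold diag_map, c. apply Rmult_le_compat_l; [lra|].
    apply pow_incr. split; [apply Rlt_le, Rdiv_lt_0_compat; lra|].
    apply Rmult_le_reg_r with ((1 + t) * (1 + (1 + t) * x)); [nra|].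
    replace (2 / (1 + t) * ((1 + t) * (1 + (1 + t) * x)))
      with (2 * (1 + (1 + t) * x)) by (field; lra).
    replace ((1 + 2 * x) / (1 + (1 + t) * x) * ((1 + t) * (1 + (1 + t) * x)))
      with ((1 + 2 * x) * (1 + t)) by (field; nra).
    nra. }
  set (X := Rabs y / c + Rabs r + 1).
  assert (0 <= Rabs y / c) by (apply Rdiv_le_0_compat; [apply Rabs_pos|lra]).
  pose proof (Rle_abs r). pose proof (Rle_abs y). pose proof (Rabs_pos r).
  exists X. split; [unfold X; lra|].
  assert (HX : 0 < X) by (unfold X; lra).
  assert (Rabs y < X * c).
  { replace (Rabs y) with (Rabs y / c * c) by (field; lra).
    apply Rmult_lt_compat_r; unfold X; lra. }
  pose proof (Hlin X HX). lra.
Qed.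

Lemma lam_of_diag_map (k : nat) (t u : R) :
  1 < t -> 0 <= u -> lam_of k t u = diag_map k t (u / (1 + t)).
Proof.
  intros Ht Hu. unfold lam_of, diag_map.
  replace ((1 + 2 * (u / (1 + t))) / (1 + (1 + t) * (u / (1 + t))))
    with (2 * / (1 + t) * ((1 + t + 2 * u) / (2 * (1 + u)))) by (field; lra).
  rewrite !Rpow_mult_distr, pow_inv, pow_add.
  assert (0 < (1 + t) ^ k) by (apply pow_lt; lra). field. lra.
Qed.

(* Completing the square, with w = sqrt((theta+1)/2):
   quad u = 2 (u - w)^2 + 2 (1 + w) ((k+1) - w (k-1)) u. *)
Lemma quad_square_form (k : nat) (t w u : R) :
  w * w = (t + 1) / 2 ->
  quad k t u = 2 * (u - w) ^ 2 + 2 * (1 + w) * ((INR k + 1) - w * (INR k - 1)) * u.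
Proof.
  intros Hw. replace t with (2 * (w * w) - 1) by lra. unfold quad. ring.
Qed.

(* theta <= theta_cr exactly when the linear coefficient above is >= 0. *)
Lemma below_theta_cr_iff (k : nat) (t : R) :
  (2 <= k)%nat -> 1 < t ->
  (t <= theta_cr k <-> sqrt ((t + 1) / 2) * (INR k - 1) <= INR k + 1).
Proof.
  intros Hk Ht.
  assert (HK : 2 <= INR k) by (apply (le_INR 2 k) in Hk; simpl in Hk; lra).
  set (w := sqrt ((t + 1) / 2)).
  assert (Hw2 : w * w = (t + 1) / 2) by (apply sqrt_sqrt; lra).
  assert (Hw0 : 0 <= w) by apply sqrt_pos.
  set (c0 := (INR k + 1) / (INR k - 1)).
  assert (Hc0 : c0 * (INR k - 1) = INR k + 1) by (unfold c0; field; lra).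
  assert (Hc0p : 0 < c0) by (unfold c0; apply Rdiv_lt_0_compat; lra).
  unfold theta_cr. fold c0. simpl pow. rewrite Rmult_1_r, <- Hc0.
  split; intros H.
  - apply Rmult_le_compat_r; [lra|]. nra.
  - assert (w <= c0) by (apply Rmult_le_reg_r with (INR k - 1); lra). nra.
Qed.

Lemma quad_pos_subcritical (k : nat) (t u : R) :
  (2 <= k)%nat -> 1 < t -> t <= theta_cr k ->
  0 <= u -> u <> sqrt ((t + 1) / 2) -> 0 < quad k t u.
Proof.
  intros Hk Ht Hcr Hu Hne.
  apply below_theta_cr_iff in Hcr; [|exact Hk|exact Ht].
  set (w := sqrt ((t + 1) / 2)) in *.
  assert (Hw0 : 0 <= w) by apply sqrt_pos.
  rewrite (quad_square_form k t w u) by (apply sqrt_sqrt; lra).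
  assert (0 < (u - w) ^ 2).
  { replace ((u - w) ^ 2) with (Rsqr (u - w)) by (unfold Rsqr; ring).
    apply Rsqr_pos_lt. lra. }
  assert (0 <= (1 + w) * ((INR k + 1) - w * (INR k - 1)) * u).
  { apply Rmult_le_pos; [apply Rmult_le_pos|]; lra. }
  lra.
Qed.

Lemma quadratic_two_positive_roots (b c : R) :
  0 < c -> b < 0 -> 8 * c < b ^ 2 ->
  exists x1 x2, 0 < x1 < x2 /\
    forall u, 2 * u ^ 2 + b * u + c = 2 * (u - x1) * (u - x2).
Proof.
  intros Hc Hb Hdisc.
  set (s := sqrt (b ^ 2 - 8 * c)).
  assert (Hs2 : s * s = b ^ 2 - 8 * c) by (apply sqrt_sqrt; lra).
  assert (Hs0 : 0 < s) by (apply sqrt_lt_R0; lra).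
  assert (Hsb : s < - b) by nra.
  exists ((- b - s) / 4), ((- b + s) / 4). split; [lra|].
  intros u. replace c with ((b ^ 2 - s * s) / 8) by lra. field.
Qed.

Lemma quad_roots_supercritical (k : nat) (t : R) :
  (2 <= k)%nat -> 1 < t -> theta_cr k < t ->
  exists x1 x2, 0 < x1 < x2 /\ forall u, quad k t u = 2 * (u - x1) * (u - x2).
Proof.
  intros Hk Ht Hcr.
  assert (Hsup : INR k + 1 < sqrt ((t + 1) / 2) * (INR k - 1)).
  { apply Rnot_le_lt. rewrite <- below_theta_cr_iff by assumption. lra. }
  set (w := sqrt ((t + 1) / 2)) in *.
  assert (Hw2 : w * w = (t + 1) / 2) by (apply sqrt_sqrt; lra).
  assert (Hw0 : 0 <= w) by apply sqrt_pos.
  set (b := 4 - (t - 1) * (INR k - 1)).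
  assert (Hb : b < - 4 * w).
  { assert (Hb : b = - 4 * w + 2 * (1 + w) * ((INR k + 1) - w * (INR k - 1))).
    { unfold b. replace t with (2 * (w * w) - 1) by lra. ring. }
    assert (0 < (1 + w) * (w * (INR k - 1) - (INR k + 1))) by (apply Rmult_lt_0_compat; lra).
    lra. }
  destruct (quadratic_two_positive_roots b (t + 1)) as [x1 [x2 [Hx Hq]]];
    [lra|lra|nra|].
  exists x1, x2. split; [exact Hx|].
  intros u. rewrite <- Hq. unfold quad. fold b. ring.
Qed.
(* Subcritical shape: diag_map is increasing on (0, oo); its derivative
   vanishes at most at the single point w / (1 + theta). *)
Lemma diag_map_increasing_subcritical (k : nat) (t : R) :
  (2 <= k)%nat -> 1 < t -> t <= theta_cr k ->
  strict_incr_on (diag_map k t) (fun x => 0 < x).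
Proof.
  intros Hk Ht Hcr.
  set (r0 := sqrt ((t + 1) / 2) / (1 + t)).
  assert (Hr0 : (1 + t) * r0 = sqrt ((t + 1) / 2)) by (unfold r0; field; lra).
  assert (Hside : forall a b, 0 <= a -> a < b -> (b <= r0 \/ r0 <= a) ->
            diag_map k t a < diag_map k t b).
  { intros a b Ha Hab Hor. apply diag_map_incr; [lia|lra|lra|lra|].
    intros c Hc. apply quad_pos_subcritical; [lia|lra|lra|nra|].
    rewrite <- Hr0. intros E. apply Rmult_eq_reg_l in E; [|lra].
    destruct Hor; lra. }
  intros a b Ha Hb Hab.
  destruct (Rle_lt_dec b r0); [apply Hside; lra|].
  destruct (Rle_lt_dec r0 a); [apply Hside; lra|].
  apply Rlt_trans with (diag_map k t r0); apply Hside; lra.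
Qed.

Lemma diag_map_N_shape (k : nat) (t x1 x2 : R) :
  (1 <= k)%nat -> 1 < t -> 0 < x1 < x2 ->
  (forall u, quad k t u = 2 * (u - x1) * (u - x2)) ->
  let r1 := x1 / (1 + t) in let r2 := x2 / (1 + t) in
  strict_incr_on (diag_map k t) (fun x => 0 < x <= r1) /\
  strict_decr_on (diag_map k t) (fun x => r1 <= x <= r2) /\
  strict_incr_on (diag_map k t) (fun x => r2 <= x).
Proof.
  intros Hk Ht Hx Hq r1 r2.
  assert (Hr1 : (1 + t) * r1 = x1) by (unfold r1; field; lra).
  assert (Hr2 : (1 + t) * r2 = x2) by (unfold r2; field; lra).
  split; [|split]; intros a b Ha Hb Hab.
  - apply diag_map_incr; [exact Hk|lra|lra|lra|]. intros c Hc. rewrite Hq.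
    assert ((1 + t) * c < x1) by nra. nra.
  - apply diag_map_decr; [exact Hk|lra|nra|lra|]. intros c Hc. rewrite Hq.
    assert (x1 < (1 + t) * c < x2) by nra. nra.
  - apply diag_map_incr; [exact Hk|lra|nra|lra|]. intros c Hc. rewrite Hq.
    assert (x2 < (1 + t) * c) by nra. nra.
Qed.

Theorem mainTheorem4 (k : nat) (theta : R) :
  (2 <= k)%nat -> 1 < theta ->
  (theta <= theta_cr k ->
     forall lam : R, 0 < lam -> num_TISGM_eq k lam theta 1) /\
  (theta_cr k < theta ->
     exists x1 x2 : R,
       0 < x1 /\ 0 < x2 /\ x1 <> x2 /\
       quad k theta x1 = 0 /\ quad k theta x2 = 0 /\
       lam_of k theta x1 <> lam_of k theta x2 /\
       let lm := Rmin (lam_of k theta x1) (lam_of k theta x2) in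
       let lp := Rmax (lam_of k theta x1) (lam_of k theta x2) in
       (forall lam : R, 0 < lam ->
          (lam < lm \/ lp < lam) -> num_TISGM_eq k lam theta 1) /\
       (forall lam : R, 0 < lam ->
          (lam = lm \/ lam = lp) -> num_TISGM_eq k lam theta 2) /\
       (forall lam : R, lm < lam < lp -> num_TISGM_eq k lam theta 3)).
Proof.
  intros Hk Ht.
  assert (Hk1 : (1 <= k)%nat) by lia.
  assert (Hcont : forall x, 0 <= x -> continuity_pt (diag_map k theta) x)
    by (intros; now apply diag_map_continuous).
  assert (Hbetween : forall x, 0 < x -> 0 < diag_map k theta x < x)
    by (intros; now apply diag_map_between).
  assert (Hunb := diag_map_unbounded k theta Ht).
  split.
  - intros Hcr lam Hlam. apply num_TISGM_of_preimages; [lia|lra|].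
    apply preimages_increasing; auto.
    now apply diag_map_increasing_subcritical.
  - intros Hcr.
    destruct (quad_roots_supercritical k theta Hk Ht Hcr) as [x1 [x2 [Hx Hq]]].
    destruct (diag_map_N_shape k theta x1 x2 Hk1 Ht Hx Hq) as [Hleft [Hmid Hright]].
    set (r1 := x1 / (1 + theta)) in *. set (r2 := x2 / (1 + theta)) in *.
    assert (Hr1 : 0 < r1) by (unfold r1; apply Rdiv_lt_0_compat; lra).
    assert (Hr12 : r1 < r2).
    { unfold r1, r2. apply Rmult_lt_compat_r; [apply Rinv_0_lt_compat|]; lra. }
    pose proof (local_min_lt_local_max _ r1 r2 Hr12 Hmid) as HBA.
    exists x1, x2.
    rewrite !lam_of_diag_map by lra. fold r1 r2.
    rewrite Rmin_right, Rmax_left by lra. cbv zeta.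
    repeat split; try lra; try (rewrite Hq; ring).
    + intros lam Hlam Hout. apply num_TISGM_of_preimages; [lia|lra|].
      now apply (preimages_outside _ Hcont Hbetween Hunb r1 r2).
    + intros lam Hlam Hcrit. apply num_TISGM_of_preimages; [lia|lra|].
      now apply (preimages_critical _ Hcont Hbetween Hunb r1 r2).
    + intros lam Hin. apply num_TISGM_of_preimages; [lia|lra|].
      now apply (preimages_inside _ Hcont Hbetween Hunb r1 r2).
Qed.
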